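(* Let $\gamma$ be a generator of $\mathbb{F}_q^*$, let $f_1,\dots,f_s\in\mathbb{F}_q[x]$ be polynomials of degree at most $d$, and let $M$ be the $s\times s$ matrix over $\mathbb{F}_q(x)$ with $(j,i)$ entry $f_i(\gamma^j x)$ for $j=0,\dots,s-1$, $i=1,\dots,s$. Then: (1) $\det(M)\ne0$ iff $f_1,\dots,f_s$ are linearly independent over the subfield $\mathbb{F}_q(x^{q-1})$ of $\mathbb{F}_q(x)$; (2) if $q-1>d$, then $\det(M)\neq0$ iff $f_1,\dots,f_s$ are linearly independent over $\mathbb{F}_q$.
   Context: $\mathbb{F}_q(x^{q-1})$ denotes the subfield of $\mathbb{F}_q(x)$ consisting of rational functions of the form $u(x^{q-1})$ with $u\in\mathbb{F}_q(x)$. *)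

From HB Require Import structures.
From mathcomp Require Import all_boot all_order all_algebra.
Set Implicit Arguments. Unset Strict Implicit. Unset Printing Implicit Defensive.
Import Order.TTheory GRing.Theory.
Local Open Scope ring_scope.

Notation ratfun F := {fraction {poly F}}.
Definition polyF (F : fieldType) (p : {poly F}) : ratfun F := FracField.tofrac p.

(* The subfield F_q(x^{q-1}) of F_q(x): rational functions u(x^{q-1}),
   u = p/r in F_q(x), i.e. elements p(x^{q-1}) / r(x^{q-1}) with r <> 0. *)
Definition subfield_xq1 (F : finFieldType) (a : ratfun F) : Prop :=
  exists p r : {poly F}, r != 0 /\
              a = polyF (p \Po 'X^(#|F|.-1)) / polyF (r \Po 'X^(#|F|.-1)).

Definition lin_indep_over_subfield (F : fieldType) (K : ratfun F -> Prop)
    (s : nat) (f : 'I_s -> {poly F}) : Prop :=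
  forall c : 'I_s -> ratfun F, (forall i, K (c i)) ->
    \sum_(i < s) c i * polyF (f i) = 0 -> forall i, c i = 0.

Definition lin_indep_over_base (F : fieldType) (s : nat)
    (f : 'I_s -> {poly F}) : Prop :=
  forall c : 'I_s -> F, \sum_(i < s) c i *: f i = 0 -> forall i, c i = 0.

Definition Mmat (F : fieldType) (gamma : F) (s : nat) (f : 'I_s -> {poly F})
  : 'M[ratfun F]_s :=
  \matrix_(j < s, i < s) polyF ((f i) \Po (gamma ^+ j *: 'X)).

From HB Require Import structures.
From mathcomp Require Import all_boot all_order all_algebra.
Import GRing.Theory.
Set Implicit Arguments. Unset Strict Implicit. Unset Printing Implicit Defensive.

Local Open Scope ring_scope.
Local Open Scope quotient_scope.

(* Let q = #|F|, n = q - 1 and let sigma be the F-automorphism x |-> gamma x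
   of F(x).  The matrix M of the theorem is the transpose of the Casoratian
   (s^j (f_i))_(i,j) of the f_i with respect to s = sigma, so the proof has
   three independent parts.
   1. For any field endomorphism s of a field L, the Casoratian of
      f_1..f_k vanishes iff the f_i satisfy a nontrivial linear relation with
      s-invariant coefficients (casoratian_eq0, by induction on k).
   2. The fixed field of sigma is F(x^n) (dilation_fixedP): a fixed p/r is
      rewritten over the denominator N(r) = prod_(b in F^* ) r(bx), which is
      sigma-invariant, and a sigma-invariant polynomial only has monomials of
      degree divisible by the order n of gamma.
   3. If deg f_i < n, independence over F(x^n) is equivalent to independence
      over F (indep_subfield_base): clearing denominators gives a relation
      sum_i u_i(x^n) f_i = 0, and comparing the blocks of coefficients of
      degrees [kn, (k+1)n) gives sum_i (u_i)_k f_i = 0 for every k.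
   To build sigma, an injective ring morphism R -> K into a field is first
   extended to the fraction field of R (frac_lift_rmorphism). *)

Local Notation tf := (@FracField.tofrac _).

Section FracLift.
Variables (R : idomainType) (K : fieldType) (phi : {rmorphism R -> K}).
Hypothesis phi_inj : injective phi.

Lemma fracE (a : {fraction R}) : a = tf \n_(repr a) / tf \d_(repr a).
Proof.
rewrite -[in LHS](reprK a); set x := repr a.
have pi_den : (\pi x : {fraction R}) * tf \d_x = tf \n_x.
  rewrite !piE; apply/eqmodP; rewrite /= FracField.equivfE /FracField.mulf.
  by rewrite !numden_Ratio ?mulf_neq0 ?oner_neq0 ?denom_ratioP // !mulr1 mulrC.
by rewrite -pi_den mulfK // tofrac_eq0 denom_ratioP.
Qed.

Lemma fracP (a : {fraction R}) : exists p r, r != 0 /\ a = tf p / tf r.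
Proof. by exists \n_(repr a), \d_(repr a); split; [exact: denom_ratioP | exact: fracE]. Qed.

Definition frac_lift (a : {fraction R}) : K := phi \n_(repr a) / phi \d_(repr a).

Lemma rmorph_inj_neq0 p : p != 0 -> phi p != 0.
Proof. by rewrite -(rmorph0 phi) (inj_eq phi_inj). Qed.

Lemma frac_liftE p r : r != 0 -> frac_lift (tf p / tf r) = phi p / phi r.
Proof.
move=> r0; set a := tf p / tf r.
have /eqP := fracE a; rewrite {1}/a eq_sym eqr_div ?tofrac_eq0 ?denom_ratioP //.
rewrite -!tofracM tofrac_eq => /eqP E.
by apply/eqP; rewrite /frac_lift eqr_div ?rmorph_inj_neq0 ?denom_ratioP // -!rmorphM E.
Qed.

Lemma frac_lift_tofrac p : frac_lift (tf p) = phi p.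
Proof.
by rewrite -[tf p]divr1 -tofrac1 frac_liftE ?oner_neq0 // rmorph1 divr1.
Qed.

Lemma frac_lift_zmod_morphism : zmod_morphism frac_lift.
Proof.
move=> a b; have [p [r [r0 ->]]] := fracP a; have [p' [r' [r'0 ->]]] := fracP b.
rewrite -mulNr -tofracN addf_div ?tofrac_eq0 // -!tofracM -tofracD.
rewrite !frac_liftE ?mulf_neq0 // -mulNr -rmorphN addf_div ?rmorph_inj_neq0 //.
by rewrite rmorphD !rmorphM.
Qed.

Lemma frac_lift_monoid_morphism : monoid_morphism frac_lift.
Proof.
split=> [|a b]; first by rewrite -tofrac1 frac_lift_tofrac rmorph1.
have [p [r [r0 ->]]] := fracP a; have [p' [r' [r'0 ->]]] := fracP b.
rewrite mulf_div -!tofracM !frac_liftE ?mulf_neq0 //.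
by rewrite mulf_div !rmorphM.
Qed.

(* frac_lift as a ring morphism; the morphism laws use injectivity of phi, so
   the structure is packed explicitly rather than declared canonical. *)
Definition frac_lift_rmorphism : {rmorphism {fraction R} -> K} :=
  HB.pack frac_lift (GRing.isZmodMorphism.Build _ _ _ frac_lift_zmod_morphism)
    (GRing.isMonoidMorphism.Build _ _ _ frac_lift_monoid_morphism).
End FracLift.

Section Casoratian.
Variables (L : fieldType) (s : {rmorphism L -> L}).

Definition casoratian n (f : 'I_n -> L) : 'M[L]_n := \matrix_(i, j) iter j s (f i).

Lemma casoratianE n (f : 'I_n -> L) i j : casoratian f i j = iter j s (f i).
Proof. by rewrite mxE. Qed.

Definition fixed_relation n (f c : 'I_n -> L) : Prop :=
  [/\ forall i, s (c i) = c i, exists i, c i != 0 & \sum_i c i * f i = 0].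

Lemma casoratian_singularP n (f : 'I_n -> L) :
  reflect (exists2 v : 'I_n -> L, exists i, v i != 0 &
             forall j : 'I_n, \sum_i v i * iter j s (f i) = 0)
          (\det (casoratian f) == 0).
Proof.
apply: (iffP det0P) => [[v v0 v_rel] | [v [i vi] v_rel]].
- exists (v 0).
    apply/existsP; apply: contraNT v0 => /existsPn v0.
    by apply/eqP/rowP => i; rewrite mxE; apply/eqP/negbNE/v0.
  move=> j; have /rowP/(_ j) := v_rel; rewrite !mxE => v_rel_j.
  by rewrite -[RHS]v_rel_j; apply: eq_bigr => i _; rewrite casoratianE.
- exists (\row_i v i); first by apply: contraNneq vi => /rowP/(_ i); rewrite !mxE => ->.
  apply/rowP => j; rewrite !mxE -[RHS](v_rel j).
  by apply: eq_bigr => k _; rewrite mxE casoratianE.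
Qed.

Lemma casoratian_kernel n (f v : 'I_n -> L) : \det (casoratian f) != 0 ->
  (forall j : 'I_n, \sum_i v i * iter j s (f i) = 0) -> forall i, v i = 0.
Proof.
move=> f_det v_rel i; apply/eqP; move: f_det; apply: contraNT => vi.
by apply/casoratian_singularP; exists v => //; exists i.
Qed.

Lemma casoratian_map n (f : 'I_n -> L) :
  map_mx s (casoratian f) = casoratian (fun i => s (f i)).
Proof. by apply/matrixP => i j; rewrite mxE !casoratianE -iterSr. Qed.

Lemma iter_fixed_relation n (f c : 'I_n -> L) : fixed_relation f c ->
  forall j, \sum_i c i * iter j s (f i) = 0.
Proof.
case=> c_fix _ c_rel; elim=> [//|j IH].
rewrite -[RHS](rmorph0 s) -[X in s X]IH rmorph_sum; apply: eq_bigr => i _.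
by rewrite rmorphM c_fix.
Qed.

(* Induction step: if the Casoratian of f_1..f_n is nonsingular but that of
   f_0..f_n is singular, normalize a kernel vector w by w_0 = 1; then the
   vector (s w_i - w_i)_(i>0) is killed by the nonsingular Casoratian of
   s f_1..s f_n, so w is s-invariant. *)
Lemma casoratian_step n (f : 'I_n.+1 -> L) :
  \det (casoratian (fun k : 'I_n => f (lift ord0 k))) != 0 ->
  \det (casoratian f) = 0 -> exists c, fixed_relation f c.
Proof.
set g := fun k => _ => g_det /eqP/casoratian_singularP[v [i0 vi0] v_rel].
have v0 : v ord0 != 0.
  apply: contraNneq g_det => v00; apply/casoratian_singularP.
  exists (fun k => v (lift ord0 k)).
    by case: (unliftP ord0 i0) vi0 => [k -> | ->]; [exists k | rewrite v00 eqxx].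
  move=> j; have := v_rel (widen_ord (leqnSn n) j).
  by rewrite big_ord_recl v00 mul0r add0r.
pose w i := v i / v ord0.
have w0 : w ord0 = 1 by rewrite /w divff.
have w_rel (j : 'I_n.+1) : \sum_i w i * iter j s (f i) = 0.
  rewrite -[RHS](mul0r (v ord0)^-1) -[X in X * _](v_rel j) mulr_suml.
  by apply: eq_bigr => i _; rewrite mulrAC.
have w_fix k : s (w (lift ord0 k)) = w (lift ord0 k).
  apply/eqP; rewrite -subr_eq0; apply/eqP; move: k.
  apply: (casoratian_kernel (f := fun k => s (g k))).
    by rewrite -casoratian_map det_map_mx fmorph_eq0.
  move=> j; have rel0 : \sum_i w i * iter j s (f i) = 0 := w_rel (widen_ord (leqnSn n) j).
  have rel1 : \sum_i w i * iter j.+1 s (f i) = 0 := w_rel (lift ord0 j).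
  have : \sum_i (s (w i) - w i) * iter j.+1 s (f i) = 0.
    rewrite (eq_bigr (fun i => s (w i * iter j s (f i)) - w i * iter j.+1 s (f i))).
      by rewrite sumrB -rmorph_sum rel0 rel1 rmorph0 subrr.
    by move=> i _; rewrite mulrBl rmorphM.
  rewrite big_ord_recl w0 rmorph1 subrr mul0r add0r => rel.
  by rewrite -[RHS]rel; apply: eq_bigr => k _; rewrite -iterSr.
exists w; split; last exact: (w_rel ord0).
- by move=> i; case: (unliftP ord0 i) => [k ->|->]; rewrite ?w_fix ?w0 ?rmorph1.
- by exists ord0; rewrite w0 oner_eq0.
Qed.

Lemma casoratian_eq0 n (f : 'I_n -> L) :
  \det (casoratian f) = 0 <-> exists c, fixed_relation f c.
Proof.
split=> [|[c c_rel]]; last first.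
  apply/eqP/casoratian_singularP; exists c; last exact: iter_fixed_relation.
  by case: c_rel.
elim: n f => [|n IH] f f_det.
  by move: f_det; rewrite det_mx00 => /eqP; rewrite oner_eq0.
have [g_det|] := eqVneq (\det (casoratian (fun k => f (lift ord0 k)))) 0; last first.
  by move/casoratian_step; apply.
have [c [c_fix [i ci] c_rel]] := IH _ g_det.
exists (fun i => if unlift ord0 i is Some k then c k else 0); split.
- by move=> i'; case: (unliftP ord0 i') => [k|] _; rewrite ?c_fix ?rmorph0.
- by exists (lift ord0 i); rewrite liftK.
- rewrite big_ord_recl unlift_none mul0r add0r -[RHS]c_rel.
  by apply: eq_bigr => k _; rewrite liftK.
Qed.
End Casoratian.

Section Dilation.
Variable F : fieldType.
Implicit Types (c : F) (p r : {poly F}).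

Lemma prim_root_neq0 m c : m.-primitive_root c -> c != 0.
Proof. by move=> c_prim; rewrite (prim_root_eq0 c_prim) -lt0n (prim_order_gt0 c_prim). Qed.

Lemma coef_dilate c p i : (p \Po (c *: 'X))`_i = c ^+ i * p`_i.
Proof.
have -> : p \Po (c *: 'X) = \poly_(i < size p) (p`_i * c ^+ i).
  by rewrite comp_polyE poly_def; apply: eq_bigr => j _; rewrite exprZn scalerA.
rewrite coef_poly; case: ltnP => [_|p_small]; first by rewrite mulrC.
by rewrite nth_default // mulr0.
Qed.

Lemma dilate_eq0 c p : c != 0 -> (p \Po (c *: 'X) == 0) = (p == 0).
Proof. by move=> c0; rewrite comp_poly2_eq0 // size_scale // size_polyX. Qed.

Lemma dilate_tofrac_inj c : c != 0 ->
  injective (tf \o comp_poly (c *: 'X) : {poly F} -> {fraction {poly F}}).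
Proof.
move=> c0 p q /eqP; rewrite /= tofrac_eq -subr_eq0 -comp_polyB dilate_eq0 //.
by rewrite subr_eq0 => /eqP.
Qed.

Definition dilation c (c0 : c != 0) : {rmorphism ratfun F -> ratfun F} :=
  frac_lift_rmorphism (dilate_tofrac_inj c0).

Lemma dilationE c (c0 : c != 0) p r : r != 0 ->
  dilation c0 (tf p / tf r) = tf (p \Po (c *: 'X)) / tf (r \Po (c *: 'X)).
Proof. exact: (frac_liftE (dilate_tofrac_inj c0)). Qed.

Lemma dilation_tofrac c (c0 : c != 0) p : dilation c0 (tf p) = tf (p \Po (c *: 'X)).
Proof. exact: (frac_lift_tofrac (dilate_tofrac_inj c0)). Qed.

Lemma iter_dilation c (c0 : c != 0) j p :
  iter j (dilation c0) (tf p) = tf (p \Po (c ^+ j *: 'X)).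
Proof.
elim: j => [|j IH]; first by rewrite expr0 scale1r comp_polyXr.
rewrite iterS IH dilation_tofrac.
by rewrite -comp_polyA comp_polyZ comp_polyX scalerA exprSr.
Qed.
End Dilation.

Definition rat_in_Xn (F : fieldType) (m : nat) (a : ratfun F) : Prop :=
  exists p r : {poly F}, r != 0 /\ a = polyF (p \Po 'X^m) / polyF (r \Po 'X^m).

Lemma compXn_eq0 (F : fieldType) (m : nat) (p : {poly F}) :
  (0 < m)%N -> (p \Po 'X^m == 0) = (p == 0).
Proof. by move=> m_gt0; rewrite comp_poly_eq0 // size_polyXn ltnS. Qed.

Section PrimitiveDilation.
Variables (F : fieldType) (m : nat) (c : F).
Hypothesis c_prim : m.-primitive_root c.

Lemma dilate_compXn (u : {poly F}) : (u \Po 'X^m) \Po (c *: 'X) = u \Po 'X^m.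
Proof.
rewrite -comp_polyA; congr (u \Po _).
by rewrite rmorphXn /= comp_polyX exprZn (prim_expr_order c_prim) scale1r.
Qed.

(* Conversely an invariant polynomial is a polynomial in x^m: its i-th
   coefficient is multiplied by c^i, which is 1 only if m divides i. *)
Lemma dilate_fixed_poly (p : {poly F}) :
  p \Po (c *: 'X) = p -> exists u, p = u \Po 'X^m.
Proof.
have m_gt0 := prim_order_gt0 c_prim.
move=> p_fix; exists (\poly_(i < size p) p`_(i * m)).
apply/polyP => i; rewrite coef_comp_poly_Xn // coef_poly.
case: ifP => [/dvdnP [k ->]|m_ndvd_i].
  rewrite mulnK //; case: ltnP => // p_small.
  by rewrite nth_default // (leq_trans p_small) // leq_pmulr.
have := congr1 (fun q : {poly F} => q`_i) p_fix; rewrite /= coef_dilate.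
have [//|pi0] := eqVneq p`_i 0.
move/(canRL (mulfK pi0)); rewrite divff // => /eqP.
by rewrite -(prim_order_dvd c_prim) m_ndvd_i.
Qed.
End PrimitiveDilation.

(* Over a finite field, the product of all nonzero dilates of r is invariant
   under every dilation and is a multiple of r: it serves as a common
   invariant denominator. *)
Section Norm.
Variable F : finFieldType.

Definition dilation_norm (r : {poly F}) : {poly F} :=
  \prod_(b : F | b != 0) (r \Po (b *: 'X)).

(* The norm is invariant: dilation by c permutes the nonzero dilates. *)
Lemma dilation_norm_fixed (c : F) (r : {poly F}) : c != 0 ->
  dilation_norm r \Po (c *: 'X) = dilation_norm r.
Proof.
move=> c0; rewrite /dilation_norm rmorph_prod /= [RHS](reindex_inj (mulIf c0)) /=.
apply: eq_big => [b|b _]; first by rewrite mulf_eq0 (negPf c0) orbF.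
by rewrite -comp_polyA comp_polyZ comp_polyX scalerA.
Qed.

Lemma dilation_normE (r : {poly F}) :
  dilation_norm r = r * \prod_(b : F | (b != 0) && (b != 1)) (r \Po (b *: 'X)).
Proof.
by rewrite /dilation_norm (bigD1 1) ?oner_neq0 //= scale1r comp_polyXr.
Qed.

Lemma dilation_norm_neq0 (r : {poly F}) : r != 0 -> dilation_norm r != 0.
Proof. by move=> r0; apply/prodf_neq0 => b b0; rewrite dilate_eq0. Qed.
End Norm.

Section FixedField.
Variables (F : finFieldType) (m : nat) (c : F).
Hypothesis c_prim : m.-primitive_root c.

Lemma dilation_fixedP (a : ratfun F) :
  dilation (prim_root_neq0 c_prim) a = a <-> rat_in_Xn m a.
Proof.
have c0 := prim_root_neq0 c_prim; have m_gt0 := prim_order_gt0 c_prim.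
split; last first.
  case=> p [r [r0 ->]].
  by rewrite /polyF dilationE ?compXn_eq0 // !(dilate_compXn c_prim).
move=> a_fix; have [p [r [r0 a_def]]] := fracP a.
set E := \prod_(b : F | (b != 0) && (b != 1)) (r \Po (b *: 'X)).
have N0 := dilation_norm_neq0 r0.
have E0 : E != 0 by move: N0; rewrite dilation_normE mulf_eq0 negb_or => /andP[].
have a_N : a = tf (p * E) / tf (dilation_norm r).
  by rewrite a_def dilation_normE !tofracM -mulf_div divff ?mulr1 // tofrac_eq0.
have pE_fix : (p * E) \Po (c *: 'X) = p * E.
  move: a_fix; rewrite a_N dilationE // dilation_norm_fixed // => /eqP.
  by rewrite eqr_div ?tofrac_eq0 // -!tofracM tofrac_eq (inj_eq (mulIf N0)) => /eqP.
have [u pE_u] := dilate_fixed_poly c_prim pE_fix.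
have [v N_v] := dilate_fixed_poly c_prim (dilation_norm_fixed r c0).
exists u, v; split; first by rewrite -(compXn_eq0 _ m_gt0) -N_v.
by rewrite a_N /polyF -pE_u -N_v.
Qed.
End FixedField.

Section ExpansionInXn.
Variables (F : fieldType) (m : nat).

Lemma low_high_eq0 (A B : {poly F}) :
  (size A <= m)%N -> A + 'X^m * B = 0 -> A = 0 /\ B = 0.
Proof.
move=> A_small AB0.
have A0 : A = 0.
  apply/polyP => k; rewrite coef0; have [k_lt_m|m_le_k] := ltnP k m.
    by have := congr1 (fun q : {poly F} => q`_k) AB0; rewrite coefD coefXnM k_lt_m addr0 coef0.
  exact: nth_default (leq_trans A_small m_le_k).
split=> //; move/eqP: AB0; rewrite A0 add0r mulf_eq0 -size_poly_eq0 size_polyXn /=.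
exact/eqP.
Qed.

Lemma compXn_split (p : {poly F}) :
  p \Po 'X^m = (p`_0)%:P + 'X^m * (drop_poly 1 p \Po 'X^m).
Proof.
rewrite -{1}(poly_take_drop 1 p) comp_polyD comp_polyM expr1 comp_polyX mulrC.
congr (_ + _); rewrite (_ : take_poly 1 p = (p`_0)%:P) ?comp_polyC //.
by apply/polyP => i; rewrite coef_take_poly coefC; case: i.
Qed.

Variables (s : nat) (f : 'I_s -> {poly F}).
Hypothesis f_small : forall i, (size (f i) <= m)%N.

Lemma compXn_relation_coef (u : 'I_s -> {poly F}) :
  \sum_i (u i \Po 'X^m) * f i = 0 -> forall k, \sum_i (u i)`_k *: f i = 0.
Proof.
have split_rel (v : 'I_s -> {poly F}) : \sum_i (v i \Po 'X^m) * f i = 0 ->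
    \sum_i (v i)`_0 *: f i = 0 /\ \sum_i (drop_poly 1 (v i) \Po 'X^m) * f i = 0.
  move=> v_rel; apply: low_high_eq0.
    rewrite (leq_trans (size_sum _ _ _)) //; apply/bigmax_leqP => i _.
    exact: leq_trans (size_scale_leq _ _) (f_small i).
  rewrite -[RHS]v_rel mulr_sumr -big_split; apply: eq_bigr => i _.
  by rewrite [v i \Po _]compXn_split mulrDl mul_polyC mulrA.
move=> rel k; elim: k u rel => [|k IH] u /split_rel [rel0 rel1] //.
by rewrite -[RHS](IH _ rel1); apply: eq_bigr => i _; rewrite coef_drop_poly addn1.
Qed.
End ExpansionInXn.

Lemma common_denominator (F : fieldType) (m n : nat) (c : 'I_n -> ratfun F) :
  (0 < m)%N -> (forall i, rat_in_Xn m (c i)) ->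
  exists (R : {poly F}) (Q : 'I_n -> {poly F}),
    R \Po 'X^m != 0 /\ forall i, c i * tf (R \Po 'X^m) = tf (Q i \Po 'X^m).
Proof.
move=> m_gt0 c_in.
have /fin_all_exists [pr pr_def] : forall i, exists pr : {poly F} * {poly F},
    pr.2 != 0 /\ c i = polyF (pr.1 \Po 'X^m) / polyF (pr.2 \Po 'X^m).
  by move=> i; have [p [r pr_def]] := c_in i; exists (p, r).
exists (\prod_i (pr i).2), (fun i => (pr i).1 * \prod_(k | k != i) (pr k).2).
split=> [|i]; first by rewrite compXn_eq0 //; apply/prodf_neq0 => i _; case: (pr_def i).
have [r0 ->] := pr_def i.
rewrite (bigD1 i) //= !comp_polyM /polyF !tofracM mulrA divfK //.
by rewrite tofrac_eq0 compXn_eq0.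
Qed.

Lemma indep_subfield_base (F : fieldType) (m s : nat) (f : 'I_s -> {poly F}) :
  (0 < m)%N -> (forall i, (size (f i) <= m)%N) ->
  lin_indep_over_subfield (rat_in_Xn m) f <-> lin_indep_over_base f.
Proof.
move=> m_gt0 f_small; rewrite /lin_indep_over_subfield /polyF.
split=> [indep c rel i | indep c c_in rel i].
- have c_in k : rat_in_Xn m (tf (c k)%:P).
    by exists (c k)%:P, 1; rewrite oner_neq0 !comp_polyC /polyF tofrac1 divr1.
  have rel_frac : \sum_k tf (c k)%:P * tf (f k) = 0.
    by rewrite -[RHS]tofrac0 -[in RHS]rel rmorph_sum; apply: eq_bigr => k _; rewrite -tofracM mul_polyC.
  by move/eqP: (indep _ c_in rel_frac i); rewrite tofrac_eq0 polyC_eq0 => /eqP.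
- have [R [Q [R0 cQ]]] := common_denominator m_gt0 c_in.
  have Q_rel : \sum_k (Q k \Po 'X^m) * f k = 0.
    apply/eqP; rewrite -tofrac_eq0 rmorph_sum /=; apply/eqP.
    rewrite -[RHS](mulr0 (tf (R \Po 'X^m))) -[X in _ * X]rel mulr_sumr.
    by apply: eq_bigr => k _; rewrite tofracM -cQ mulrAC mulrC.
  have Q0 k : Q k = 0.
    apply/polyP => e; rewrite coef0; apply: (indep (fun l => (Q l)`_e)).
    exact: compXn_relation_coef.
  apply/eqP; move: (cQ i); rewrite Q0 comp_polyC tofrac0 => /eqP.
  by rewrite mulf_eq0 tofrac_eq0 (negPf R0) orbF.
Qed.

Lemma casoratian_dilation_neq0 (F : finFieldType) (m : nat) (c : F)
    (c_prim : m.-primitive_root c) (s : nat) (f : 'I_s -> {poly F}) :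
  \det (casoratian (dilation (prim_root_neq0 c_prim)) (fun i => polyF (f i))) != 0
  <-> lin_indep_over_subfield (rat_in_Xn m) f.
Proof.
split=> [det_neq0 a a_in rel i | indep].
- apply/eqP; move: det_neq0; apply: contraNT => ai; apply/eqP/casoratian_eq0.
  exists a; split=> //; last by exists i.
  by move=> k; apply/dilation_fixedP/a_in.
- apply/eqP => /casoratian_eq0 [a [a_fix [i ai] rel]].
  move: ai; rewrite (indep a _ rel) ?eqxx // => k; exact/(dilation_fixedP c_prim)/a_fix.
Qed.

Theorem propositionE7 (F : finFieldType) (gamma : F)
  (hgamma : (#|F|.-1).-primitive_root gamma)
  (d s : nat) (f : 'I_s -> {poly F}) (hdeg : forall i, (size (f i) <= d.+1)%N) :
  (\det (Mmat gamma f) != 0 <-> lin_indep_over_subfield (@subfield_xq1 F) f) /\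
  ((d < #|F|.-1)%N ->
     (\det (Mmat gamma f) != 0 <-> lin_indep_over_base f)).
Proof.
have Mmat_casoratian : Mmat gamma f =
    (casoratian (dilation (prim_root_neq0 hgamma)) (fun i => polyF (f i)))^T.
  by apply/matrixP => j i; rewrite !mxE iter_dilation.
have indep_subfield : \det (Mmat gamma f) != 0 <->
    lin_indep_over_subfield (@subfield_xq1 F) f.
  by rewrite Mmat_casoratian det_tr; exact: casoratian_dilation_neq0.
split=> // d_small; apply: (iff_trans indep_subfield); apply: indep_subfield_base.
- exact: prim_order_gt0 hgamma.
- by move=> i; apply: leq_trans (hdeg i) d_small.
Qed.
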